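(* Let $D$ be a digraph with at least one cycle, with girth $g$ and circumference $c$, such that $g-1\le c-g+2$ (i.e. $g\le \frac{c+3}{2}$). Then $\chi_A(D)\le c-g+2$.
   Context: Digraphs are finite and loopless; cycles are directed. The girth (resp. circumference) is the length of a shortest (resp. longest) directed cycle. $\chi_A(D)$ is the minimum number of colors in a vertex coloring of $D$ in which every color class induces an acyclic subdigraph. *)

From mathcomp Require Import all_boot.
From Stdlib Require Import ClassicalEpsilon.
Set Implicit Arguments. Unset Strict Implicit. Unset Printing Implicit Defensive.

Section Digraph.
Variables (V : finType) (e : rel V).

Definition loopless : Prop := forall x : V, ~~ e x x.

(* a directed cycle: a nonempty sequence of pairwise distinct vertices
   v_0 ... v_{l-1} with arcs v_i -> v_{i+1} and v_{l-1} -> v_0;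
   its length is the number of vertices (= number of arcs). *)
Definition dcycle (s : seq V) : bool := [&& s != [::], uniq s & cycle e s].

Definition has_cycle : Prop := exists s, dcycle s.

Definition is_girth (g : nat) : Prop :=
  (exists s, dcycle s /\ size s = g) /\ (forall s, dcycle s -> g <= size s).

Definition is_circumference (c : nat) : Prop :=
  (exists s, dcycle s /\ size s = c) /\ (forall s, dcycle s -> size s <= c).

(* acyclic k-colouring: every colour class induces an acyclic subdigraph,
   i.e. no directed cycle has all its vertices of one colour. *)
Definition acyclic_coloring (k : nat) (f : V -> 'I_k) : Prop :=
  forall (i : 'I_k) (s : seq V), dcycle s -> ~ all (fun x => f x == i) s.

Definition acyclic_colorable (k : nat) : Prop :=
  exists f : V -> 'I_k, acyclic_coloring f.

End Digraph.

Definition pb (P : Prop) : bool :=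
  if excluded_middle_informative P then true else false.

(* chi_A(D): least k admitting an acyclic k-colouring (0 if none exists,
   which cannot happen for loopless digraphs). *)
Definition dichromatic (V : finType) (e : rel V) : nat :=
  match excluded_middle_informative (exists k, pb (acyclic_colorable e k)) with
  | left H => ex_minn H
  | right _ => 0
  end.

(** Every nonempty vertex set A contains a vertex v with at most c - g + 1
    in-neighbours in A: take v to be the first vertex of a longest path P in A.
    By maximality all in-neighbours of v lie on P, and an in-neighbour at
    position i of P closes a cycle of length i + 2, so i ranges over an
    interval of c - g + 1 values.  Colouring greedily along this degeneracy
    order, each vertex avoids the colours of its in-neighbours inside the set,
    so any monochromatic cycle through the last coloured vertex would need a
    monochromatic arc into it. *)

From mathcomp Require Import all_boot.
From Stdlib Require Import ClassicalEpsilon.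
From mathcomp Require Import zify.
Set Implicit Arguments. Unset Strict Implicit. Unset Printing Implicit Defensive.

Lemma pbP (P : Prop) : pb P <-> P.
Proof. by rewrite /pb; case: excluded_middle_informative. Qed.

Lemma dichromatic_min (V : finType) (e : rel V) (k : nat) :
  acyclic_colorable e k -> dichromatic e <= k.
Proof.
move=> colk; rewrite /dichromatic; case: excluded_middle_informative => [ex|].
  by case: ex_minnP => m _; apply; apply/pbP.
by case; exists k; apply/pbP.
Qed.

Lemma exists_maximizer (T : Type) (P : T -> Prop) (sz : T -> nat) (B : nat) :
  (exists x, P x) -> (forall x, P x -> sz x <= B) ->
  exists x, P x /\ forall y, P y -> sz y <= sz x.
Proof.
move=> [x0 Px0] szB.
have ex : exists n, pb (exists x, P x /\ sz x = n) by exists (sz x0); apply/pbP; exists x0.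
have bnd n : pb (exists x, P x /\ sz x = n) -> n <= B by move/pbP=> [x [Px <-]]; apply: szB.
case: (ex_maxnP ex bnd) => m /pbP [x [Px <-]] maxm.
by exists x; split=> // y Py; apply: maxm; apply/pbP; exists y.
Qed.

Section AcyclicColoring.
Variables (V : finType) (e : rel V).
Hypothesis e_loopless : loopless e.

Definition in_nbhd (A : {set V}) (v : V) : {set V} := [set u in A | e u v].

Definition acyclic_coloring_on (k : nat) (A : {set V}) (f : V -> 'I_k) : Prop :=
  forall i s, dcycle e s -> {subset s <= A} -> ~ all (fun x => f x == i) s.

Lemma arc_neq (u v : V) : e u v -> u != v.
Proof. by apply: contraTneq => ->; apply: e_loopless. Qed.

Lemma acyclic_coloring_on_extend k (A : {set V}) (v : V) (f : V -> 'I_k) (i0 : 'I_k) :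
  acyclic_coloring_on (A :\ v) f -> i0 \notin f @: in_nbhd A v ->
  acyclic_coloring_on A (fun x => if x == v then i0 else f x).
Proof.
move=> colf i0_fresh i s cyc_s sA mono.
have [v_s | v_s] := boolP (v \in s).
  have arc_uv : e (prev s v) v by apply: prev_cycle v_s; case/and3P: cyc_s.
  have u_s : prev s v \in s by rewrite mem_prev.
  have := allP mono _ u_s; have := allP mono _ v_s.
  rewrite eqxx (negbTE (arc_neq arc_uv)) => /eqP <- /eqP fu.
  by case/negP: i0_fresh; rewrite -fu imset_f // inE sA.
apply: (colf i s cyc_s).
  by move=> x xs; rewrite !inE sA // andbT; apply: contraNneq v_s => <-.
apply/allP=> x xs; have := allP mono x xs.
by case: (x =P v) => // xv; case/negP: v_s; rewrite -xv.
Qed.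

Lemma acyclic_colorable_degenerate k :
  0 < k -> (forall A : {set V}, A != set0 -> exists2 v, v \in A & #|in_nbhd A v| < k) ->
  acyclic_colorable e k.
Proof.
move=> k_gt0 degenerate.
suff /(_ [set: V]) [f colf] : forall A, exists f : V -> 'I_k, acyclic_coloring_on A f.
  by exists f => i s cyc_s; apply: colf => // x; rewrite inE.
move=> A; have [n] := ubnP #|A|; elim: n A => // n IH A cardA.
have [-> | /set0Pn [a Aa]] := eqVneq A set0.
  by exists (fun=> Ordinal k_gt0) => i [|x s] // _ /(_ x); rewrite mem_head inE => /(_ isT).
have [v Av small] : exists2 v, v \in A & #|in_nbhd A v| < k.
  by apply: degenerate; apply/set0Pn; exists a.
have [f colf] : exists f : V -> 'I_k, acyclic_coloring_on (A :\ v) f.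
  by apply: IH; rewrite (cardsD1 v A) Av in cardA.
have [i0 i0_fresh] : exists i0, i0 \notin f @: in_nbhd A v.
  apply/existsP; rewrite -negb_forall; apply: contraTN small => /forallP all_used.
  rewrite -leqNgt -[k]card_ord; apply: leq_trans (leq_imset_card f _).
  by apply/subset_leq_card/subsetP=> i _; apply: all_used.
by exists (fun x => if x == v then i0 else f x); apply: acyclic_coloring_on_extend.
Qed.

End AcyclicColoring.

Section LongestPath.
Variables (V : finType) (e : rel V).
Hypothesis e_loopless : loopless e.

Definition simple_path_in (A : {set V}) (v : V) (p : seq V) : bool :=
  [&& v \in A, all (fun x => x \in A) p, uniq (v :: p) & path e v p].

Lemma dcycle_path_back (v u : V) (p : seq V) :
  path e v p -> uniq (v :: p) -> u \in p -> e u v ->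
  dcycle e (v :: take (index u p).+1 p).
Proof.
move=> pth uniq_vp up arc_uv.
rewrite /dcycle [uniq _](take_uniq (index u p).+2 uniq_vp) /=.
rewrite (take_nth u) ?index_mem // rcons_path last_rcons nth_index // arc_uv andbT.
by rewrite -{2}(nth_index u up) -take_nth ?index_mem // take_path.
Qed.

Lemma exists_longest_path (A : {set V}) : A != set0 ->
  exists v p, simple_path_in A v p /\
    forall w q, simple_path_in A w q -> size q <= size p.
Proof.
case/set0Pn=> a Aa.
have [[v p] [vp longest]] : exists q : V * seq V, simple_path_in A q.1 q.2 /\
    forall r : V * seq V, simple_path_in A r.1 r.2 -> size r.2 <= size q.2.
  apply: (@exists_maximizer _ _ _ #|V|); first by exists (a, [::]); rewrite /simple_path_in Aa.
  move=> [w q] /and4P [_ _ /andP [_ uniq_q] _] /=.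
  by rewrite -(card_uniqP uniq_q) max_card.
by exists v, p; split=> // w q wq; apply: (longest (w, q)).
Qed.

Lemma in_nbhd_sub_longest_path (A : {set V}) (v : V) (p : seq V) :
  simple_path_in A v p -> (forall w q, simple_path_in A w q -> size q <= size p) ->
  {subset in_nbhd e A v <= p}.
Proof.
move=> /and4P [Av Ap uniq_vp pth] longest u; rewrite inE => /andP [Au arc_uv].
have [// | u_p] := boolP (u \in p).
have /= := longest u (v :: p); rewrite ltnn; apply.
rewrite /simple_path_in cons_uniq uniq_vp /= Au Av Ap arc_uv pth !andbT.
by rewrite inE negb_or u_p (arc_neq e_loopless arc_uv).
Qed.

Variables (g c : nat).
Hypothesis cycle_size : forall s, dcycle e s -> g <= size s <= c.

Lemma low_indegree_vertex (A : {set V}) : A != set0 ->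
  exists2 v, v \in A & #|in_nbhd e A v| <= c - g + 1.
Proof.
case/exists_longest_path=> v [p [vp longest]].
have /and4P [Av _ uniq_vp pth] := vp.
have N_p := in_nbhd_sub_longest_path vp longest.
exists v => //; rewrite cardE -(size_map (index^~ p)) -[c - g + 1](size_iota (g - 2)).
apply: uniq_leq_size.
  rewrite map_inj_in_uniq ?enum_uniq // => u1 u2; rewrite !mem_enum => /N_p u1p /N_p u2p eq_idx.
  by rewrite -(nth_index u1 u1p) eq_idx nth_index.
move=> i /mapP [u]; rewrite mem_enum => uN ->{i}.
have := uN; rewrite inE => /andP [_ arc_uv].
have := cycle_size (dcycle_path_back pth uniq_vp (N_p u uN) arc_uv).
rewrite /= size_takel ?index_mem ?N_p // mem_iota.
by move: (index u p) => i; lia.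
Qed.

End LongestPath.

Theorem mainTheorem11 (V : finType) (e : rel V) (g c : nat) :
  loopless e -> has_cycle e ->
  is_girth e g -> is_circumference e c ->
  g - 1 <= c - g + 2 ->
  dichromatic e <= c - g + 2.
Proof.
move=> e_loopless _ [_ girth_min] [_ circ_max] _.
have cycle_size s : dcycle e s -> g <= size s <= c.
  by move=> cyc_s; rewrite girth_min // circ_max.
apply/dichromatic_min/(acyclic_colorable_degenerate e_loopless); first by rewrite addn2.
move=> A A_nonempty.
have [v Av small] := low_indegree_vertex e_loopless cycle_size A_nonempty.
by exists v => //; rewrite addn2 ltnS -addn1.
Qed.
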